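(* Let $H$ be the graph on vertex set $\{0,1,\dots,42\}$ in which $i,j$ are adjacent iff $1\le|i-j|\le3$. Suppose the edges of $H$ are colored red/blue with no red cycle of length at most $8$, and suppose $\mathrm{up}(0)\notin\{RRR,RRB\}$. Then there exist $k\in\{1,\dots,39\}$ and a blue path $P_B$ in $H[\{0,\dots,k\}]$ with endpoints $0$ and $k$ such that $\mathrm{up}(k)\notin\{RRR,RRB\}$ and \[\frac{|V(P_B)\cap\{1,\dots,k\}|}{k}\ge\frac{19}{25}.\]
   Context: For a vertex $v$ with $v+3$ in the vertex set, $\mathrm{up}(v)=c_1c_2c_3\in\{R,B\}^3$ means that the edges $\{v,v+1\},\{v,v+2\},\{v,v+3\}$ have colors $c_1,c_2,c_3$ respectively ($R$ = red, $B$ = blue). *)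

From mathcomp Require Import all_boot.
Set Implicit Arguments. Unset Strict Implicit. Unset Printing Implicit Defensive.

Inductive color := R | B.

Definition is_red (c : color) : bool := if c is R then true else false.
Definition is_blue (c : color) : bool := if c is B then true else false.

Definition nV : nat := 43.
Definition adjH (x y : nat) : bool :=
  [&& x < nV, y < nV, x != y, x <= y + 3 & y <= x + 3].

(* An edge colouring: col x y is the colour of the edge {x,y};
   it is required to be symmetric (only its values on edges matter). *)
Definition symmetric_coloring (col : nat -> nat -> color) : Prop :=
  forall x y, col x y = col y x.

Definition red_edge (col : nat -> nat -> color) (x y : nat) : bool :=
  adjH x y && is_red (col x y).
Definition blue_edge (col : nat -> nat -> color) (x y : nat) : bool :=
  adjH x y && is_blue (col x y).

Definition red_cycle (col : nat -> nat -> color) (s : seq nat) : Prop :=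
  [/\ 3 <= size s, uniq s & cycle (red_edge col) s].

Definition no_short_red_cycle (col : nat -> nat -> color) : Prop :=
  forall s, red_cycle col s -> ~ (size s <= 8).

Definition up (col : nat -> nat -> color) (v : nat) : color * color * color :=
  (col v v.+1, col v v.+2, col v v.+3).

Definition blue_path_0k (col : nat -> nat -> color) (k : nat) (p : seq nat) : Prop :=
  [/\ uniq (0 :: p), all (fun v => v <= k) (0 :: p),
      path (blue_edge col) 0 p & last 0 p = k].

Definition cnt_1k (k : nat) (p : seq nat) : nat :=
  count (fun v => (1 <= v) && (v <= k)) (0 :: p).

(* Lemma 4.1 is a statement about the finitely many red/blue colourings of
   the graph H on {0,...,42}, and we prove it by a verified exhaustive search.

   The search walks along the vertices v = 0, 1, 2, ... and branches on the
   eight possible values of up(v).  It remembers only the last 13 values of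
   up (the window), plus a dynamic-programming table: for every earlier
   vertex w, a lower bound on |V(P) ∩ {1..w}| over the blue paths P from 0 to
   w inside {0..w} found so far.  The entry for v is obtained by extending
   the entry for some v - L by a blue segment from v - L to v, taken from a
   fixed catalogue of segment shapes.  A branch is closed when
   - v = 0 and up(0) is RRR or RRB (excluded by hypothesis), or
   - a red cycle of length at most 8 through v is visible in the window
     (excluded by hypothesis), or
   - v >= 1, up(v) is not RRR/RRB and the table entry c for v satisfies
     19 v <= 25 c, so that k = v answers the lemma.  The search tables (catalogues of cycle and segment shapes) are
   only guidance for the search: everything they propose is re-verified. *)

From mathcomp Require Import all_boot zify.
Set Implicit Arguments. Unset Strict Implicit. Unset Printing Implicit Defensive.

Definition triple : Type := (color * color * color)%type.

Definition up_dir (d : nat) (t : triple) : option color :=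
  match d with 1 => Some t.1.1 | 2 => Some t.1.2 | 3 => Some t.2 | _ => None end.

Lemma up_dir_up col w d k :
  up_dir d (up col w) = Some k -> [/\ 0 < d, d <= 3 & col w (w + d) = k].
Proof. by case: d => [|[|[|[|d]]]] //= [<-]; rewrite ?addn1 ?addn2 ?addn3. Qed.

(* The window at stage n: up(n-1), up(n-2), ..., up(n-13), as far as defined. *)
Definition win (col : nat -> nat -> color) (n : nat) : seq triple :=
  take 13 (rev (mkseq (up col) n)).

Lemma onth_win col n i :
  onth (win col n) i = if (i < 13) && (i < n) then Some (up col (n - i.+1)) else None.
Proof.
have size_win : size (win col n) = minn 13 n by rewrite size_take_min size_rev size_mkseq.
rewrite onthE; case: ifP => [/andP[i13 in_] | i_out].
  rewrite (nth_map (B, B, B)); last by rewrite size_win; lia.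
  rewrite nth_take // nth_rev size_mkseq // nth_mkseq //; lia.
by rewrite nth_default // size_map size_win; lia.
Qed.

Lemma win_step col v : take 13 (up col v :: win col v) = win col v.+1.
Proof. by rewrite /win mkseqS rev_rcons /= take_takel. Qed.

(* Given the window W at stage n and a shift s,
   coordinate c stands for the vertex n + s - 1 - c, and W lists the up
   values of the coordinates s, s+1, ...  (so coordinates 0..s-1 are the
   vertices above n-1, whose up values are not known yet).  The edge
   between coordinates lo > hi is read from the entry of lo. *)
Definition wlow (W : seq triple) (s lo hi : nat) : option color :=
  if s <= lo then obind (up_dir (lo - hi)) (onth W (lo - s)) else None.

Definition wcolor (W : seq triple) (s a b : nat) : option color :=
  if b < a then wlow W s a b else wlow W s b a.

Section WindowColours.

Variables (col : nat -> nat -> color) (n s : nat).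
Hypothesis col_sym : symmetric_coloring col.
Hypothesis n_s_small : n + s <= nV.

Let vtx (c : nat) : nat := n + s - 1 - c.

Lemma wlow_win lo hi k : wlow (win col n) s lo hi = Some k ->
  [/\ lo < n + s, hi < lo, adjH (vtx lo) (vtx hi) & col (vtx lo) (vtx hi) = k].
Proof.
rewrite /wlow; case: (leqP s lo) => //= s_lo; rewrite onth_win.
case: ifP => // /andP[_ lo_n] /= /up_dir_up[d_gt0 d_le3 colk].
have vtx_lo : vtx lo = n - (lo - s).+1 by rewrite /vtx; lia.
have vtx_hi : vtx hi = vtx lo + (lo - hi) by rewrite /vtx; lia.
have ns := n_s_small; rewrite /nV in ns.
by rewrite vtx_hi vtx_lo colk /adjH /nV; split => //; lia.
Qed.

Lemma wcolor_win a b k : wcolor (win col n) s a b = Some k ->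
  [/\ a < n + s, b < n + s, adjH (vtx a) (vtx b) & col (vtx a) (vtx b) = k].
Proof.
rewrite /wcolor; case: ltnP => _ /wlow_win[lo_n hi_lo adj colk]; first by split => //; lia.
by move: adj; rewrite col_sym /adjH; split => //; lia.
Qed.

End WindowColours.

(* Red edges are looked up at shift 3 (window at stage v+1, coordinate c is
   the vertex v+3-c), blue edges at shift 1 (window at stage v, coordinate c
   is the vertex v-c). *)
Definition red_in (W : seq triple) (a b : nat) : bool := oapp is_red false (wcolor W 3 a b).
Definition blue_in (W : seq triple) (a b : nat) : bool := oapp is_blue false (wcolor W 1 a b).

Lemma red_in_win col n a b : symmetric_coloring col -> n + 3 <= nV ->
  red_in (win col n) a b -> [/\ a < n + 3, b < n + 3 & red_edge col (n + 2 - a) (n + 2 - b)].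
Proof.
move=> col_sym n_small; rewrite /red_in.
case E: wcolor => [k|] //= red_k; have [a_n b_n adj colk] := wcolor_win col_sym n_small E.
have -> : n + 2 = n + 3 - 1 by lia.
by split => //; rewrite /red_edge adj colk red_k.
Qed.

Lemma blue_in_win col n a b : symmetric_coloring col -> n + 1 <= nV ->
  blue_in (win col n) a b -> [/\ a <= n, b <= n & blue_edge col (n - a) (n - b)].
Proof.
move=> col_sym n_small; rewrite /blue_in.
case E: wcolor => [k|] //= blue_k; have [a_n b_n adj colk] := wcolor_win col_sym n_small E.
rewrite addnK in adj colk.
by split; [lia | lia | rewrite /blue_edge adj colk blue_k].
Qed.

(* A trie of candidate red cycles through coordinate 3.  The node
   Node c closes kids extends the current red path to coordinate c; if
   closes holds, the edge from c back to 3 is tried, otherwise (or if that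
   edge is not red) the path is continued into the kids. *)
Inductive trie := Node of nat & bool & seq trie.

Fixpoint find_some (T U : Type) (f : T -> option U) (s : seq T) : option U :=
  if s is x :: s' then (if f x is Some y then Some y else find_some f s') else None.

Fixpoint trie_find (W : seq triple) (prev : nat) (t : trie) : option (seq nat) :=
  let: Node c closes kids := t in
  if red_in W prev c then
    if closes && red_in W c 3 then Some [:: c] else omap (cons c) (find_some (trie_find W c) kids)
  else None.

Local Notation via c kids := (Node c false kids).
Local Notation close c kids := (Node c true kids).

Definition cycle_shapes : seq trie :=
  [:: via 1 [::
      close 4 [::
        via 2 [::
          close 5 [::
            close 6 [::];
            via 7 [:: close 6 [::]; via 9 [:: close 6 [::]]];
            via 8 [:: close 6 [::]; via 9 [:: close 6 [::]]]]];
        close 5 [::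
          close 6 [::];
          via 7 [::
            close 6 [::];
            via 8 [:: close 6 [::]];
            via 9 [:: close 6 [::]]];
          via 8 [:: close 6 [::]; via 9 [:: close 6 [::]]]];
        close 6 [::
          close 5 [::];
          via 7 [:: close 5 [::]];
          via 8 [:: close 5 [::]];
          via 9 [:: via 7 [:: close 5 [::]]; via 8 [:: close 5 [::]]]];
        via 7 [::
          close 5 [:: close 6 [::]];
          close 6 [:: close 5 [::]];
          via 8 [:: close 5 [::]; close 6 [::]; via 9 [:: close 6 [::]]];
          via 9 [::
            close 6 [:: close 5 [::]];
            via 8 [:: close 5 [::]; close 6 [::]]]]]];
    via 2 [::
      close 4 [::
        close 1 [::];
        close 5 [::
          close 6 [::];
          via 7 [::
            close 6 [::];
            via 8 [:: close 6 [::]];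
            via 9 [:: close 6 [::]]];
          via 8 [:: close 6 [::]; via 9 [:: close 6 [::]]]];
        close 6 [::
          close 5 [::];
          via 7 [:: close 5 [::]];
          via 8 [:: close 5 [::]];
          via 9 [:: via 7 [:: close 5 [::]]; via 8 [:: close 5 [::]]]];
        via 7 [::
          close 5 [:: close 6 [::]];
          close 6 [:: close 5 [::]];
          via 8 [:: close 5 [::]; close 6 [::]; via 9 [:: close 6 [::]]];
          via 9 [::
            close 6 [:: close 5 [::]];
            via 8 [:: close 5 [::]; close 6 [::]]]]];
      close 5 [::
        close 4 [::
          close 1 [::];
          close 6 [::];
          via 7 [:: close 6 [::]; via 9 [:: close 6 [::]]]];
        close 6 [::
          close 4 [:: close 1 [::]];
          via 7 [:: close 4 [:: close 1 [::]]];
          via 9 [:: via 7 [:: close 4 [:: close 1 [::]]]]];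
        via 7 [::
          close 4 [:: close 1 [::]; close 6 [::]];
          close 6 [:: close 4 [:: close 1 [::]]];
          via 8 [:: close 6 [::]];
          via 9 [:: close 6 [:: close 4 [:: close 1 [::]]]]];
        via 8 [::
          close 6 [:: close 4 [:: close 1 [::]]];
          via 7 [:: close 4 [:: close 1 [::]]; close 6 [::]];
          via 9 [::
            close 6 [:: close 4 [:: close 1 [::]]];
            via 7 [:: close 4 [:: close 1 [::]]]]]]]].

(* A red cycle of length at most 8 through coordinate 3 in the window W,
   read at shift 3; the candidate proposed by the shapes is re-checked. *)
Definition red_cycle_in (W : seq triple) : bool :=
  if find_some (trie_find W 3) cycle_shapes is Some p then
    [&& 3 <= size (3 :: p), size (3 :: p) <= 8, uniq (3 :: p) & cycle (red_in W) (3 :: p)]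
  else false.

Lemma red_cycle_in_win col n : symmetric_coloring col -> no_short_red_cycle col ->
  n + 3 <= nV -> ~~ red_cycle_in (win col n).
Proof.
move=> col_sym no_cycle n_small; rewrite /red_cycle_in.
case: find_some => [p|] //; apply/negP => /and4P[size_ge3 size_le8 uniq_s cycle_s].
set s := 3 :: p in size_ge3 size_le8 uniq_s cycle_s.
have s_small x : x \in s -> x < n + 3.
  by move=> /(next_cycle cycle_s) /(red_in_win col_sym n_small) [].
apply: (no_cycle [seq n + 2 - c | c <- s]); last by rewrite size_map.
split; first by rewrite size_map.
  rewrite map_inj_in_uniq // => x y /s_small x_n /s_small y_n; lia.
by rewrite cycle_map; apply: sub_cycle cycle_s => x y /(red_in_win col_sym n_small) [].
Qed.

Lemma blue_path_cat col a v p q :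
  a <= v -> blue_path_0k col a p ->
  uniq q -> all (fun x => a < x <= v) q -> path (blue_edge col) a q -> last a q = v ->
  blue_path_0k col v (p ++ q) /\ cnt_1k v (p ++ q) = cnt_1k a p + size q.
Proof.
move=> a_v [uniq_p p_le_a path_p last_p] uniq_q q_in path_q last_q.
have q_le_v : all (fun x => x <= v) q by apply: sub_all q_in => x /andP[].
split; first split.
- rewrite -cat_cons cat_uniq uniq_p uniq_q andbT /=.
  apply/hasPn => x /(allP q_in) /andP[a_x _]; apply/negP => /(allP p_le_a) /=; lia.
- rewrite -cat_cons all_cat q_le_v andbT.
  by apply: sub_all p_le_a => x /= x_a; lia.
- by rewrite cat_path path_p last_p.
- by rewrite last_cat last_p.
rewrite /cnt_1k -cat_cons count_cat -[size q]count_predT; congr (_ + _).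
  by apply: eq_in_count => x /(allP p_le_a) /= x_a; lia.
by apply: eq_in_count => x /(allP q_in) /= /andP[a_x x_v]; lia.
Qed.

(* The dynamic-programming table at stage v: entry i describes the vertex
   v - i - 1 and, when it is Some c, certifies a blue path from 0 to that
   vertex with at least c vertices in {1..v-i-1}. *)
Definition dp_inv (col : nat -> nat -> color) (v : nat) (best : seq (option nat)) : Prop :=
  forall i c, nth None best i = Some c ->
    i < v /\ exists2 p, blue_path_0k col (v - i.+1) p & c <= cnt_1k (v - i.+1) p.

(* Catalogue of blue segment shapes (L, qs): coordinates relative to v
   (coordinate q is the vertex v - q), the segment runs from L through qs,
   ending at 0, i.e. from v - L to v. *)
Definition segments : seq (nat * seq nat) :=
  [:: (1, [:: 0]);
      (2, [:: 0]);
      (3, [:: 1; 2; 0]); (3, [:: 0]);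
      (4, [:: 2; 3; 0]); (4, [:: 2; 1; 3; 0]); (4, [:: 1; 3; 2; 0]);
      (4, [:: 1; 3; 0]); (4, [:: 1; 2; 3; 0]); (4, [:: 1; 2; 0]);
      (5, [:: 3; 4; 1; 2; 0]); (5, [:: 3; 1; 4; 2; 0]); (5, [:: 2; 4; 3; 0]);
      (5, [:: 2; 4; 1; 3; 0]); (5, [:: 2; 3; 0]); (5, [:: 2; 1; 4; 3; 0]);
      (5, [:: 2; 1; 3; 0]);
      (6, [:: 4; 5; 2; 3; 0]); (6, [:: 4; 5; 2; 1; 3; 0]);
      (6, [:: 4; 2; 5; 3; 0]); (6, [:: 4; 1; 3; 5; 2; 0]);
      (6, [:: 4; 1; 2; 5; 3; 0]); (6, [:: 3; 5; 4; 1; 2; 0]);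
      (6, [:: 3; 4; 1; 2; 0]); (6, [:: 3; 1; 4; 5; 2; 0]);
      (6, [:: 3; 1; 4; 2; 0]);
      (7, [:: 5; 6; 3; 4; 1; 2; 0]); (7, [:: 5; 3; 6; 4; 1; 2; 0]);
      (7, [:: 5; 2; 4; 6; 3; 0]); (7, [:: 5; 2; 1; 4; 6; 3; 0]);
      (7, [:: 4; 6; 5; 2; 1; 3; 0]); (7, [:: 4; 2; 5; 6; 3; 0]);
      (7, [:: 4; 2; 5; 3; 0]); (7, [:: 4; 1; 3; 6; 5; 2; 0]);
      (7, [:: 4; 1; 2; 5; 6; 3; 0]); (7, [:: 4; 1; 2; 5; 3; 0]);
      (8, [:: 6; 7; 4; 1; 3; 5; 2; 0]); (8, [:: 6; 3; 5; 7; 4; 1; 2; 0]);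
      (8, [:: 6; 3; 1; 4; 7; 5; 2; 0]); (8, [:: 5; 3; 6; 7; 4; 1; 2; 0]);
      (8, [:: 5; 3; 6; 4; 1; 2; 0]); (8, [:: 5; 2; 4; 7; 6; 3; 0]);
      (8, [:: 5; 2; 1; 4; 7; 6; 3; 0]); (8, [:: 5; 2; 1; 4; 6; 3; 0])].

Definition segment_shape (seg : nat * seq nat) : bool :=
  let: (L, qs) := seg in [&& 0 < L, uniq qs, all (fun q => q < L) qs & last L qs == 0].

Lemma segments_shape : all segment_shape segments.
Proof. by []. Qed.

Definition extend (W : seq triple) (best : seq (option nat)) (seg : nat * seq nat) : option nat :=
  let: (L, qs) := seg in
  if path (blue_in W) L qs then omap (addn (size qs)) (nth None best L.-1) else None.

Section Extension.

Variables (col : nat -> nat -> color) (v : nat) (best : seq (option nat)).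
Hypotheses (col_sym : symmetric_coloring col) (v_small : v < nV).
Hypothesis best_inv : dp_inv col v best.

Lemma extend_sound seg c : seg \in segments -> extend (win col v) best seg = Some c ->
  exists2 p, blue_path_0k col v p & c <= cnt_1k v p.
Proof.
case: seg => L qs seg_in.
have /and4P[L_gt0 uniq_qs qs_lt_L /eqP last_qs] := allP segments_shape _ seg_in.
rewrite /extend; case: ifP => // path_qs.
case E: nth => [c0|] //= [<-]; have [L_v [p path_p c0_p]] := best_inv E.
rewrite prednK // in L_v path_p c0_p.
have v1_small : v + 1 <= nV by rewrite addn1.
set q := [seq v - x | x <- qs].
have q_in : all (fun x => v - L < x <= v) q.
  by apply/allP => _ /mapP[x /(allP qs_lt_L) /= x_L ->]; lia.
have uniq_q : uniq q.
  by rewrite map_inj_in_uniq // => x y /(allP qs_lt_L) /= x_L /(allP qs_lt_L) /= y_L; lia.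
have path_q : path (blue_edge col) (v - L) q.
  by rewrite path_map; apply: sub_path path_qs => x y /(blue_in_win col_sym v1_small) [].
have last_q : last (v - L) q = v by rewrite last_map last_qs subn0.
have [path_pq cnt_pq] := blue_path_cat (leq_subr L v) path_p uniq_q q_in path_q last_q.
by exists (p ++ q); rewrite // cnt_pq size_map addnC leq_add2r.
Qed.

Definition omax (a b : option nat) : option nat :=
  if a is Some x then (if b is Some y then Some (maxn x y) else a) else b.

Definition best_at (W : seq triple) (best : seq (option nat)) : option nat :=
  foldr (fun seg acc => omax (extend W best seg) acc) None segments.

Lemma best_at_sound c : best_at (win col v) best = Some c ->
  exists2 p, blue_path_0k col v p & c <= cnt_1k v p.
Proof.
rewrite /best_at; move: c; have : {subset segments <= segments} by [].
elim: {-2}segments => [|seg segs IH] segs_sub c //=.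
have segs_sub' : {subset segs <= segments}.
  by move=> x x_in; apply: segs_sub; rewrite inE x_in orbT.
have {}IH := IH segs_sub'.
case E: extend => [x|] /=; last exact: IH.
have ext_x := extend_sound (segs_sub _ (mem_head _ _)) E.
case F: foldr => [y|] /= [<-]; last exact: ext_x.
by case: (leqP x y) => _; [exact: IH | exact: ext_x].
Qed.

End Extension.

Definition next_entry (v : nat) (W : seq triple) (best : seq (option nat)) : option nat :=
  if v == 0 then Some 0 else best_at W best.

Lemma dp_step col v best : symmetric_coloring col -> v < nV -> dp_inv col v best ->
  dp_inv col v.+1 (next_entry v (win col v) best :: best).
Proof.
move=> col_sym v_small best_inv [|i] c /=; last by rewrite subSS; apply: best_inv.
rewrite subSS subn0 /next_entry; case: eqP => [-> [<-] | _ /best_at_sound]; last first.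
  by move=> /(_ col_sym v_small best_inv).
by split => //; exists [::].
Qed.

Definition bad (t : triple) : bool := is_red t.1.1 && is_red t.1.2.

Lemma bad_upP col v : ~~ bad (up col v) <-> up col v <> (R, R, R) /\ up col v <> (R, R, B).
Proof.
rewrite /up; case: (col v v.+1); case: (col v v.+2); case: (col v v.+3) => /=;
  by split => [// | [ne_RRR ne_RRB]]; try congruence.
Qed.

Definition triples : seq triple :=
  [:: (R, R, R); (R, R, B); (R, B, R); (R, B, B); (B, R, R); (B, R, B); (B, B, R); (B, B, B)].

Lemma all_triples (P : pred triple) : all P triples -> forall t, P t.
Proof. by move=> all_P [[[] []] []]; move: all_P => /=; do !case/andP=> ? //. Qed.

(* It is written with if-then-else rather than boolean disjunction so that
   call-by-value evaluation does not explore branches that are closed. *)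
Fixpoint search (fuel v : nat) (W : seq triple) (best : seq (option nat)) : bool :=
  if fuel is fuel'.+1 then
    let b := next_entry v W best in
    let reached := (0 < v) && oapp (fun c => 19 * v <= 25 * c) false b in
    all (fun u =>
      let W' := take 13 (u :: W) in
      if (v == 0) && bad u then true
      else if red_cycle_in W' then true
      else if reached && ~~ bad u then true
      else search fuel' v.+1 W' (b :: best)) triples
  else false.

Definition good_endpoint (col : nat -> nat -> color) : Prop :=
  exists k : nat, exists p : seq nat,
    [/\ 1 <= k <= 39,
        blue_path_0k col k p,
        up col k <> (R, R, R) /\ up col k <> (R, R, B)
      & 19 * k <= 25 * cnt_1k k p].

Lemma search_sound col : symmetric_coloring col -> no_short_red_cycle col ->
  ~~ bad (up col 0) -> forall fuel v best, v + fuel <= 40 -> dp_inv col v best ->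
  search fuel v (win col v) best -> good_endpoint col.
Proof.
move=> col_sym no_cycle good0; elim=> [//|fuel IH] v best v_fuel best_inv.
cbn [search]; move=> /all_triples /(_ (up col v)); rewrite win_step.
have v_small : v < nV by rewrite /nV; lia.
have next_inv := dp_step col_sym v_small best_inv.
case: ifP => [/andP[/eqP v0 bad_v] | _]; first by move: good0; rewrite -v0 bad_v.
case: ifP => [red_v | _].
  have v1_small : v.+1 + 3 <= nV by rewrite /nV; lia.
  by have := red_cycle_in_win col_sym no_cycle v1_small; rewrite red_v.
case: ifP => [/andP[/andP[v_gt0 reach] good_v] | _]; last by apply: IH; first lia.
case: next_entry reach next_inv => [c|] //= reach /(_ 0 c erefl) [_ [p path_p c_p]].
rewrite subSS subn0 in path_p c_p; exists v, p; split => //; first lia.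
  exact/bad_upP.
by apply: leq_trans reach _; rewrite leq_mul2l c_p orbT.
Qed.

Lemma search_ok : search 40 0 [::] [::].
Proof. by vm_compute. Qed.

Theorem lemma4p1 (col : nat -> nat -> color) :
  symmetric_coloring col ->
  no_short_red_cycle col ->
  up col 0 <> (R, R, R) -> up col 0 <> (R, R, B) ->
  exists k : nat, exists p : seq nat,
    [/\ 1 <= k <= 39,
        blue_path_0k col k p,
        up col k <> (R, R, R) /\ up col k <> (R, R, B)
      & 19 * k <= 25 * cnt_1k k p].
Proof.
move=> col_sym no_cycle up0_RRR up0_RRB.
have good0 : ~~ bad (up col 0) by apply/bad_upP.
have empty_inv : dp_inv col 0 [::] by case.
exact: (search_sound col_sym no_cycle good0 (fuel := 40) (v := 0) _ empty_inv search_ok).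
Qed.
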